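(* Every straight domain is locally divided.
   Context: All rings are commutative with identity. An overring of a domain $A$ is a ring $B$ with $A\subseteq B\subseteq \operatorname{Frac}(A)$. A prime ideal $\mathfrak{p}$ of a domain $A$ is straight if for every overring $B$ of $A$, the $(A/\mathfrak{p})$-module $B/\mathfrak{p}B$ is torsion-free; $A$ is a straight domain if all its prime ideals are straight. A domain $A$ is divided if $\mathfrak{p}=\mathfrak{p}A_\mathfrak{p}$ for every prime ideal $\mathfrak{p}$, and locally divided if $A_\mathfrak{m}$ is divided for every maximal ideal $\mathfrak{m}$ of $A$. *)

From HB Require Import structures.
From mathcomp Require Import all_boot all_order all_algebra fraction.
Set Implicit Arguments. Unset Strict Implicit. Unset Printing Implicit Defensive.
Import Order.TTheory GRing.Theory Num.Theory.
Local Open Scope ring_scope.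

Section Generic.
Variable R : comNzRingType.

Definition is_subring (D : R -> Prop) : Prop :=
  D 1 /\ (forall x y, D x -> D y -> D (x - y)) /\ (forall x y, D x -> D y -> D (x * y)).

Definition is_ideal_in (D I : R -> Prop) : Prop :=
  (forall x, I x -> D x) /\ I 0 /\ (forall x y, I x -> I y -> I (x + y)) /\
  (forall r x, D r -> I x -> I (r * x)).

Definition is_prime_in (D P : R -> Prop) : Prop :=
  is_ideal_in D P /\ ~ P 1 /\
  (forall x y, D x -> D y -> P (x * y) -> P x \/ P y).

Definition is_maximal_in (D M : R -> Prop) : Prop :=
  is_ideal_in D M /\ ~ M 1 /\
  (forall J, is_ideal_in D J -> (forall x, M x -> J x) ->
     (forall x, J x <-> M x) \/ J 1).

Definition ext_ideal (I E : R -> Prop) : R -> Prop :=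
  fun z => exists s : seq (R * R),
    (forall q, q \in s -> I q.1 /\ E q.2) /\ z = \sum_(q <- s) q.1 * q.2.
End Generic.

Section InField.
Variable K : fieldType.

Definition localization_in (D P : K -> Prop) : K -> Prop :=
  fun z => exists x s, D x /\ D s /\ ~ P s /\ z = x / s.

Definition divided_in (D : K -> Prop) : Prop :=
  forall P, is_prime_in D P ->
    forall z, P z <-> ext_ideal P (localization_in D P) z.
End InField.

Section Domain.
Variable A : idomainType.
Local Notation K := {fraction A}.
Local Notation "x %:F" := (@tofrac A x).

Definition image_in_frac (I : A -> Prop) : K -> Prop :=
  fun z => exists a, I a /\ z = a%:F.

Definition fullA : A -> Prop := fun _ => True.

Definition overring (B : K -> Prop) : Prop :=
  is_subring B /\ forall a : A, B a%:F.

(* p is straight: for every overring B, B/pB is a torsion-free A/p-module,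
   i.e. for a in A \ p and b in B, a b in pB implies b in pB. *)
Definition straight_prime (p : A -> Prop) : Prop :=
  forall B, overring B ->
    forall (a : A) (b : K), ~ p a -> B b ->
      ext_ideal (image_in_frac p) B (a%:F * b) ->
      ext_ideal (image_in_frac p) B b.

Definition straight_domain : Prop :=
  forall p, is_prime_in fullA p -> straight_prime p.

Definition localization_at (m : A -> Prop) : K -> Prop :=
  localization_in (image_in_frac fullA) (image_in_frac m).

Definition locally_divided : Prop :=
  forall m, is_maximal_in fullA m -> divided_in (localization_at m).
End Domain.

(* Let m be a maximal ideal, D = A_m and P a prime of D.  It suffices to show
   x/s \in D for x \in P and s \in D \ P, and after clearing denominators for
   y = c/a with c \in p = P \cap A and a \notin p.  Straightness of p applied to
   the overrings D[y] and D[1/y] turns a y = c and a = c (1/y) into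
   y \in P D[y] and 1 \in P D[1/y].  The second relation makes y integral over D,
   so D[y] is a finite D-module with D[y] = D + P D[y]; as P lies in the
   Jacobson radical of the local ring D, Nakayama's lemma gives D[y] = D. *)

From mathcomp Require Import all_boot all_order all_algebra fraction.
From Stdlib Require Import Classical.

Set Implicit Arguments. Unset Strict Implicit. Unset Printing Implicit Defensive.
Import GRing.Theory.
Local Open Scope ring_scope.

Section SubringsAndIdeals.
Variables (R : comNzRingType) (D I : R -> Prop).

Lemma ideal_sub : is_ideal_in D I -> forall x, I x -> D x.
Proof. by case. Qed.

Lemma ideal0 : is_ideal_in D I -> I 0.
Proof. by case=> _ []. Qed.

Lemma idealD : is_ideal_in D I -> forall x z, I x -> I z -> I (x + z).
Proof. by case=> _ [_ []]. Qed.

Lemma idealMl : is_ideal_in D I -> forall r x, D r -> I x -> I (r * x).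
Proof. by case=> _ [_ []]. Qed.

Lemma ideal_sum (J : Type) (s : seq J) (F : J -> R) :
  is_ideal_in D I -> (forall j, I (F j)) -> I (\sum_(j <- s) F j).
Proof. by move=> II IF; apply: big_ind => //; [exact: ideal0 | exact: idealD]. Qed.

Lemma subring_ideal : is_subring D -> is_ideal_in D D.
Proof.
case=> D1 [DB DM]; have D0 : D 0 by rewrite -(subrr 1); apply: DB.
have DN x : D x -> D (- x) by move=> Dx; rewrite -sub0r; apply: DB.
split=> //; split=> //; split; last exact: DM.
by move=> x z Dx Dz; rewrite -[z]opprK; apply/DB/DN.
Qed.

Lemma ext_ideal_mul E c w : I c -> E w -> ext_ideal I E (c * w).
Proof.
move=> Ic Ew; exists [:: (c, w)]; split; last by rewrite big_seq1.
by move=> q; rewrite inE => /eqP ->.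
Qed.
End SubringsAndIdeals.

Section PowerCombinations.
Variable R : comNzRingType.

(* [horner_over D y] is D[y]; for an ideal P of D, [horner_over P y] is P D[y]. *)
Definition horner_over (S : R -> Prop) (y : R) : R -> Prop :=
  fun z => exists2 f : {poly R}, (forall i, S f`_i) & z = f.[y].

Definition comb_pow (S : R -> Prop) (y : R) (n : nat) (z : R) : Prop :=
  exists d : nat -> R, (forall i, S (d i)) /\ z = \sum_(i < n.+1) d i * y ^+ i.

Variables (D S : R -> Prop) (y : R).
Hypothesis S_ideal : is_ideal_in D S.

Lemma comb_pow_monomial n r i : S r -> (i <= n)%N -> comb_pow S y n (r * y ^+ i).
Proof.
move=> Sr lein; exists (fun j => if j == i then r else 0); split.
  by move=> j; case: eqP => _ //; exact: ideal0 S_ideal.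
rewrite (bigD1 (Ordinal (lein : (i < n.+1)%N))) //= eqxx big1 ?addr0 // => j.
by rewrite -(inj_eq val_inj) /= => /negbTE ->; rewrite mul0r.
Qed.

Lemma comb_pow0 n : comb_pow S y n 0.
Proof.
exists (fun _ => 0); split; first by move=> _; exact: ideal0 S_ideal.
by rewrite big1 // => i _; rewrite mul0r.
Qed.

Lemma comb_powD n z1 z2 :
  comb_pow S y n z1 -> comb_pow S y n z2 -> comb_pow S y n (z1 + z2).
Proof.
move=> [d1 [S1 ->]] [d2 [S2 ->]]; exists (fun i => d1 i + d2 i); split.
  by move=> i; apply: (idealD S_ideal).
by rewrite -big_split; apply: eq_bigr => i _; rewrite mulrDl.
Qed.

Lemma comb_pow_sum n (J : Type) (s : seq J) (F : J -> R) :
  (forall j, comb_pow S y n (F j)) -> comb_pow S y n (\sum_(j <- s) F j).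
Proof. by move=> SF; apply: big_ind => //; [exact: comb_pow0 | exact: comb_powD]. Qed.

Lemma comb_powMl n r z : D r -> comb_pow S y n z -> comb_pow S y n (r * z).
Proof.
move=> Dr [d [Sd ->]]; rewrite mulr_sumr; apply: comb_pow_sum => i.
by rewrite mulrA; apply: comb_pow_monomial; [exact: (idealMl S_ideal) | rewrite -ltnS].
Qed.

Lemma comb_pow_le m n z : (m <= n)%N -> comb_pow S y m z -> comb_pow S y n z.
Proof.
move=> lemn [d [Sd ->]]; apply: comb_pow_sum => i.
apply: comb_pow_monomial (Sd i) _.
by rewrite -ltnS (leq_trans (ltn_ord i)).
Qed.

Lemma comb_powMX n z : comb_pow S y n z -> comb_pow S y n.+1 (y * z).
Proof.
move=> [d [Sd ->]]; rewrite mulr_sumr; apply: comb_pow_sum => i.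
by rewrite mulrCA -exprS; apply: comb_pow_monomial.
Qed.

Lemma comb_pow_idealMl n r z : S r -> comb_pow D y n z -> comb_pow S y n (r * z).
Proof.
move=> Sr [d [Dd ->]]; rewrite mulr_sumr; apply: comb_pow_sum => i.
rewrite mulrA [r * _]mulrC; apply: comb_pow_monomial; last by rewrite -ltnS.
exact: (idealMl S_ideal).
Qed.

Lemma horner_over_comb_pow z : horner_over S y z -> exists n, comb_pow S y n z.
Proof.
case=> f Sf ->; exists (size f); rewrite horner_coef; apply: comb_pow_sum => i.
exact: comb_pow_monomial (Sf i) (ltnW (ltn_ord i)).
Qed.
End PowerCombinations.

Section PolynomialValues.
Variables (R : comNzRingType) (D : R -> Prop) (y : R).

Lemma ext_ideal_horner_over (I P : R -> Prop) z : is_ideal_in D P ->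
  (forall x, I x -> P x) -> ext_ideal I (horner_over D y) z -> horner_over P y z.
Proof.
move=> P_ideal IP [s [Is ->]]; rewrite big_seq; apply: big_ind.
- by exists 0 => [i|]; rewrite ?coef0 ?horner0 //; exact: ideal0 P_ideal.
- move=> _ _ [f Pf ->] [g Pg ->]; exists (f + g) => [i|]; last by rewrite hornerD.
  by rewrite coefD; apply: (idealD P_ideal).
- move=> q /Is [/IP Pq [f Df ->]]; exists (q.1 *: f) => [i|]; last by rewrite hornerZ.
  by rewrite coefZ mulrC; apply: (idealMl P_ideal).
Qed.

Hypothesis D_subring : is_subring D.
Let D_ideal := subring_ideal D_subring.

Lemma horner_overC c : D c -> horner_over D y c.
Proof.
move=> Dc; exists c%:P; last by rewrite hornerC.
by move=> i; rewrite coefC; case: eqP => _ //; exact: ideal0 D_ideal.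
Qed.

Lemma horner_overX : horner_over D y y.
Proof.
exists 'X; last by rewrite hornerX.
by move=> i; rewrite coefX; case: eqP => _; [case: D_subring | exact: ideal0 D_ideal].
Qed.

Lemma horner_over_subring : is_subring (horner_over D y).
Proof.
case: D_subring => D1 [DB DM]; split; first exact: horner_overC.
split=> _ _ [f Df ->] [g Dg ->].
  by exists (f - g) => [i|]; rewrite ?coefB ?hornerD ?hornerN //; apply: DB.
exists (f * g) => [i|]; last by rewrite hornerM.
by rewrite coefM; apply: (ideal_sum _ D_ideal) => j; apply: DM.
Qed.
End PolynomialValues.

Section RadicalNakayama.
Variables (R : comNzRingType) (D P : R -> Prop) (y : R).
Hypothesis D_subring : is_subring D.
Hypothesis P_ideal : is_ideal_in D P.
Hypothesis P_rad : forall x, P x -> exists2 u, D u & u * (1 - x) = 1.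
Let D_ideal := subring_ideal D_subring.

Lemma comb_pow_rad_cancel x n z :
  P x -> comb_pow D y n ((1 - x) * z) -> comb_pow D y n z.
Proof.
move=> /P_rad [u Du u_inv] /(comb_powMl D_ideal Du).
by rewrite mulrA u_inv mul1r.
Qed.

Lemma comb_pow_reduce n z :
  comb_pow D y n (y ^+ n.+1) -> comb_pow D y n.+1 z -> comb_pow D y n z.
Proof.
move=> Hn [d [Dd ->]]; rewrite big_ord_recr /=.
apply: (comb_powD D_ideal); first by exists d.
exact: (comb_powMl D_ideal (Dd n.+1) Hn).
Qed.

Lemma integral_powers n :
  comb_pow D y n (y ^+ n.+1) -> forall j, comb_pow D y n (y ^+ j).
Proof.
move=> Hn; elim=> [|j IHj].
  by rewrite -[y ^+ 0]mul1r; apply: (comb_pow_monomial _ D_ideal) => //; case: D_subring.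
by rewrite exprS; apply: comb_pow_reduce Hn (comb_powMX D_ideal IHj).
Qed.

Lemma powers_lower N k : comb_pow P y N y ->
  (forall j, comb_pow D y k.+1 (y ^+ j)) -> forall j, comb_pow D y k (y ^+ j).
Proof.
move=> [g [Pg Ey]] Hk.
have top : comb_pow P y k.+1 (y ^+ k.+1).
  rewrite exprSr [X in _ * X]Ey mulr_sumr; apply: (comb_pow_sum P_ideal) => i.
  by rewrite mulrCA -exprD; apply: (comb_pow_idealMl P_ideal).
(* The top coefficient lies in P, so 1 minus it is a unit of D. *)
have {top} top : comb_pow D y k (y ^+ k.+1).
  case: top => p [Pp]; rewrite big_ord_recr /= => Etop.
  apply: (comb_pow_rad_cancel (Pp k.+1)); exists p; split.
    by move=> i; exact: (ideal_sub P_ideal (Pp i)).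
  by rewrite mulrBl mul1r {1}Etop addrK.
by move=> j; apply: comb_pow_reduce top (Hk j).
Qed.

Lemma integral_rad_multiple_mem N :
  (exists n, comb_pow D y n (y ^+ n.+1)) -> comb_pow P y N y -> D y.
Proof.
move=> [n /integral_powers] + Hy; elim: n => [|n IHn] Hn.
  by case: (Hn 1%N) => d [Dd]; rewrite big_ord1 expr0 mulr1 expr1 => ->.
exact/IHn/(powers_lower Hy Hn).
Qed.

Lemma integral_of_inverse v N : v * y = 1 -> comb_pow P v N 1 ->
  exists n, comb_pow D y n (y ^+ n.+1).
Proof.
move=> vy /(comb_pow_le P_ideal (leqnSn N)) [g [Pg E]]; exists N.
have Ey : y ^+ N.+1 = g 0%N * y ^+ N.+1 + \sum_(i < N.+1) g i.+1 * y ^+ (N - i).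
  rewrite -[LHS]mul1r {1}E mulr_suml big_ord_recl expr0 mulr1; congr (_ + _).
  apply: eq_bigr => i _; rewrite lift0 -mulrA; congr (_ * _).
  have -> : y ^+ N.+1 = y ^+ i.+1 * y ^+ (N - i) by rewrite -exprD addSn subnKC // -ltnS.
  by rewrite mulrA -exprMn vy expr1n mul1r.
apply: (comb_pow_rad_cancel (Pg 0%N)).
rewrite mulrBl mul1r {1}Ey addrC addKr; apply: (comb_pow_sum D_ideal) => i.
by apply: (comb_pow_monomial _ D_ideal) (leq_subr _ _); exact: (ideal_sub P_ideal (Pg _)).
Qed.
End RadicalNakayama.

Section Straightness.
Variable A : idomainType.
Local Notation K := {fraction A}.
Local Notation "x %:F" := (@tofrac A x).

Lemma horner_over_overring (D : K -> Prop) (t : K) :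
  overring D -> overring (horner_over D t).
Proof.
by case=> D_subring DA; split=> [|a]; [exact: horner_over_subring | exact: horner_overC].
Qed.

Lemma straight_prime_ext (p : A -> Prop) (B : K -> Prop) a c b w :
  straight_prime p -> overring B -> ~ p a -> p c -> B b -> B w ->
  a%:F * b = c%:F * w -> ext_ideal (image_in_frac p) B b.
Proof.
move=> p_straight B_over pa pc Bb Bw abcw; apply: (p_straight _ B_over _ _ pa Bb).
by rewrite abcw; apply: ext_ideal_mul Bw; exists c.
Qed.
End Straightness.

Section LocalizationAtMaximal.
Variable A : idomainType.
Local Notation K := {fraction A}.
Local Notation "x %:F" := (@tofrac A x).
Variable m : A -> Prop.
Hypothesis m_max : is_maximal_in (@fullA A) m.
Let m_ideal : is_ideal_in (@fullA A) m := m_max.1.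
Local Notation D := (localization_at m).

Lemma maximal_ideal_prime x z : m (x * z) -> m x \/ m z.
Proof.
move=> mxz; have [mx|mNx] := classic (m x); [by left | right].
pose J w := exists u r, m u /\ w = u + x * r.
have J_ideal : is_ideal_in (@fullA A) J.
  split=> //; split.
    by exists 0, 0; rewrite mulr0 addr0; split=> //; exact: ideal0 m_ideal.
  split=> [_ _ [u1 [r1 [mu1 ->]]] [u2 [r2 [mu2 ->]]]|r _ _ [u [s [mu ->]]]].
    exists (u1 + u2), (r1 + r2); rewrite mulrDr addrACA; split=> //.
    exact: (idealD m_ideal).
  exists (r * u), (r * s); rewrite mulrDr mulrCA; split=> //.
  exact: (idealMl m_ideal).
have mJ u : m u -> J u by exists u, 0; rewrite mulr0 addr0.
case: (m_max.2.2 J J_ideal mJ) => [Jm|[u [r [mu Eu]]]].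
  case: mNx; apply/Jm; exists 0, 1.
  by rewrite mulr1 add0r; split=> //; exact: ideal0 m_ideal.
have -> : z = z * u + (x * z) * r by rewrite [x * z]mulrC -mulrA -mulrDr -Eu mulr1.
by apply: (idealD m_ideal); last rewrite mulrC; exact: (idealMl m_ideal).
Qed.

Lemma tofrac_neq0 b : ~ m b -> b%:F != 0.
Proof.
move=> mNb; rewrite tofrac_eq0; apply: contra_notN mNb => /eqP ->.
exact: ideal0 m_ideal.
Qed.

Lemma localization_atP z : D z <-> exists a b, ~ m b /\ z = a%:F / b%:F.
Proof.
split=> [[x [s [[a [_ ->]] [[b [_ ->]] [mNb ->]]]]]|[a [b [mNb ->]]]].
  by exists a, b; split=> // mb; apply: mNb; exists b.
exists a%:F, b%:F; split; first by exists a.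
split; first by exists b.
split=> //.
by move=> [c [mc /eqP]]; rewrite tofrac_eq => /eqP bc; apply: mNb; rewrite bc.
Qed.

Lemma localization_at_frac a b : ~ m b -> D (a%:F / b%:F).
Proof. by move=> mNb; apply/localization_atP; exists a, b. Qed.

Lemma localization_at_tofrac a : D a%:F.
Proof.
rewrite -[a%:F]divr1 -tofrac1; apply: localization_at_frac.
by case: m_max => _ [].
Qed.

Lemma localization_at_overring : overring D.
Proof.
split=> [|a]; last exact: localization_at_tofrac.
split; first by rewrite -tofrac1; exact: localization_at_tofrac.
have mNM b1 b2 : ~ m b1 -> ~ m b2 -> ~ m (b1 * b2) by move=> ? ? /maximal_ideal_prime [].
split=> _ _ /localization_atP [a1 [b1 [mNb1 ->]]] /localization_atP [a2 [b2 [mNb2 ->]]].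
  rewrite -mulNr addf_div ?tofrac_neq0 // mulNr -!tofracM -tofracB.
  exact/localization_at_frac/mNM.
by rewrite mulf_div -!tofracM; exact/localization_at_frac/mNM.
Qed.

Let D_subring : is_subring D := localization_at_overring.1.
Let D_ideal := subring_ideal D_subring.

Section PrimeOfLocalization.
Variable P : K -> Prop.
Hypothesis P_prime : is_prime_in D P.
Let P_ideal : is_ideal_in D P := P_prime.1.
Let PN1 : ~ P 1 := P_prime.2.1.
Let P_mul x z : D x -> D z -> P (x * z) -> P x \/ P z := P_prime.2.2 x z.

Lemma localization_prime_rad x : P x -> exists2 u, D u & u * (1 - x) = 1.
Proof.
move=> Px; have /localization_atP [w [t [mNt Ex]]] := ideal_sub P_ideal Px.
have tF0 := tofrac_neq0 mNt.
have [mw|mNw] := classic (m w).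
  have mNtw : ~ m (t - w).
    by move=> mtw; apply: mNt; rewrite -(subrK w t); exact: (idealD m_ideal).
  exists (t%:F / (t - w)%:F); first exact: localization_at_frac.
  rewrite Ex -[in 1 - _](divff tF0) -mulrBl -tofracB mulrA divfK ?divff //.
  exact: tofrac_neq0.
case: PN1; have -> : 1 = t%:F / w%:F * x.
  by rewrite Ex mulf_div [t%:F * _]mulrC divff // mulf_neq0 ?tofrac_neq0.
exact: (idealMl P_ideal (localization_at_frac _ mNw)).
Qed.

Lemma contraction_prime : is_prime_in (@fullA A) (fun a => P a%:F).
Proof.
split; last split; first split=> //.
- split; first by rewrite tofrac0; exact: ideal0 P_ideal.
  split=> [a b Pa Pb|r a _ Pa]; first by rewrite tofracD; exact: (idealD P_ideal).
  by rewrite tofracM; exact: (idealMl P_ideal (localization_at_tofrac r)).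
- by rewrite tofrac1.
- by move=> a b _ _; rewrite tofracM; apply: P_mul; exact: localization_at_tofrac.
Qed.

Section Straight.
Hypothesis A_straight : straight_domain A.

Lemma contraction_frac_mem c a : P c%:F -> ~ P a%:F -> D (c%:F / a%:F).
Proof.
move=> Pc Pa; have [->|cF0] := eqVneq c%:F 0.
  by rewrite mul0r; exact: ideal0 D_ideal.
have aF0 : a%:F != 0 by apply: contra_notN Pa => /eqP ->; exact: ideal0 P_ideal.
set y := c%:F / a%:F; set v := a%:F / c%:F.
have vy : v * y = 1 by rewrite mulf_div [a%:F * _]mulrC divff // mulf_neq0.
have p_straight := A_straight contraction_prime.
have image_sub z : image_in_frac (fun b => P b%:F) z -> P z by case=> b [Pb ->].
have y_over := horner_over_overring y localization_at_overring.
have v_over := horner_over_overring v localization_at_overring.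
have D1 : D 1 := D_subring.1.
have [N yN] : exists N, comb_pow P y N y.
  apply: (horner_over_comb_pow P_ideal).
  apply: (ext_ideal_horner_over P_ideal image_sub).
  apply: (straight_prime_ext p_straight y_over Pa Pc (horner_overX _ D_subring)).
    exact: (horner_overC _ D_subring D1).
  by rewrite mulr1 mulrC divfK.
have [M vM] : exists M, comb_pow P v M 1.
  apply: (horner_over_comb_pow P_ideal).
  apply: (ext_ideal_horner_over P_ideal image_sub).
  apply: (straight_prime_ext p_straight v_over Pa Pc (horner_overC _ D_subring D1)).
    exact: (horner_overX _ D_subring).
  by rewrite mulr1 mulrC divfK.
have y_integral := integral_of_inverse D_subring P_ideal localization_prime_rad vy vM.
exact: (integral_rad_multiple_mem D_subring P_ideal localization_prime_rad y_integral yN).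
Qed.

Lemma prime_div_mem x s : P x -> D s -> ~ P s -> D (x / s).
Proof.
move=> Px Ds PNs.
have /localization_atP [X [U [mNU Ex]]] := ideal_sub P_ideal Px.
have /localization_atP [S [T [mNT Es]]] := Ds.
have UF0 := tofrac_neq0 mNU; have TF0 := tofrac_neq0 mNT.
have PNT : ~ P T%:F.
  move=> PT; apply: PN1; rewrite -(mulVf TF0); apply: (idealMl P_ideal) PT.
  by rewrite -div1r -tofrac1; exact: localization_at_frac.
have PX : P X%:F.
  rewrite -(divfK UF0 X%:F) mulrC -Ex.
  exact: (idealMl P_ideal (localization_at_tofrac U) Px).
have PNS : ~ P S%:F.
  move=> PS; have : P (s * T%:F) by rewrite Es divfK.
  by case/P_mul => //; exact: localization_at_tofrac.
have -> : x / s = X%:F / S%:F * (T%:F / U%:F).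
  by rewrite Ex Es invf_div !mulf_div [U%:F * _]mulrC.
exact: D_subring.2.2 _ _ (contraction_frac_mem PX PNS) (localization_at_frac _ mNU).
Qed.

Lemma prime_div_prime x s : P x -> D s -> ~ P s -> P (x / s).
Proof.
move=> Px Ds PNs; have s0 : s != 0.
  by apply: contra_notN PNs => /eqP ->; exact: ideal0 P_ideal.
have : P (s * (x / s)) by rewrite mulrC divfK.
by case/P_mul => //; exact: prime_div_mem.
Qed.
End Straight.
End PrimeOfLocalization.

Lemma straight_localization_divided : straight_domain A -> divided_in D.
Proof.
move=> A_straight P P_prime z; have P_ideal := P_prime.1; split.
  move=> Pz; rewrite -[z]mulr1; apply: ext_ideal_mul Pz _.
  exists 1, 1; rewrite divr1; have D1 := D_subring.1; do !split => //.
  exact: P_prime.2.1.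
case=> s [Ps ->]; rewrite big_seq.
apply: big_ind; [exact: ideal0 P_ideal | exact: (idealD P_ideal) |].
move=> q /Ps [Pq [x [t [Dx [Dt [PNt ->]]]]]].
by rewrite mulrCA; apply: (idealMl P_ideal Dx); exact: prime_div_prime.
Qed.
End LocalizationAtMaximal.

Theorem corollary3p2 (A : idomainType) : straight_domain A -> locally_divided A.
Proof. by move=> A_straight m m_max; exact: straight_localization_divided. Qed.
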